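(* Let $d,d_\pi\ge1$, $\alpha,\beta,\beta'\in\mathbb{R}$, and let $e$ be a random transition with associated random vectors $\phi_e\in\mathbb{R}^d$ and $\Delta_e\in\mathbb{R}^d$ with $\mathbb{E}_e[\phi_e\Delta_e^\top]=-M$ for a matrix $M\in\mathbb{R}^{d\times d}$. Let $H_w\in\mathbb{R}^{d_\pi\times d}$, $H_\psi\in\mathbb{R}^{d_\pi\times d_\pi}$, and define block matrices on $\mathbb{R}^d\times\mathbb{R}^{d_\pi}$ \[B_e=\begin{pmatrix}I+\alpha\phi_e\Delta_e^\top&0\\0&I\end{pmatrix},\qquad A_0=\begin{pmatrix}(1-\beta')I&0\\\beta H_w&I+\beta H_\psi\end{pmatrix},\] and $\bar\Sigma:=\mathbb{E}_e[A_0B_e-B_eA_0]$. Then the null space of $\bar\Sigma$ contains the entire policy subspace $\{(0,x_\psi):x_\psi\in\mathbb{R}^{d_\pi}\}$.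
   Context: Setting (linear actor-critic): state $\theta=(w,\psi)\in\mathbb{R}^d\times\mathbb{R}^{d_\pi}$ in coordinates centred at an equilibrium $\theta^\star=0$. The expansion is the TD update $P_e(w,\psi)=(w+\alpha\delta(w,e)\phi(s,a),\psi)$ with TD error $\delta(w,e)=r+\gamma_{\mathrm{RL}}\phi(s',a')^\top w-\phi(s,a)^\top w$ for a transition $e=(s,a,r,s')$ (with $a'$ the next action), $\phi_e=\phi(s,a)$, $\Delta_e=\gamma_{\mathrm{RL}}\phi(s',a')-\phi_e$; thus $B_e=DP_e(\theta^\star)$. The baseline consolidation is $Q_0(w,\psi)=((1-\beta')w,\psi+\beta H(w+w^\star,\psi+\psi^\star))$ with $H(w^\star,\psi^\star)=0$, $H_w,H_\psi$ the partial Jacobians of $H$ at the equilibrium, so $A_0=DQ_0(\theta^\star)$. $\bar\Sigma$ is the first-moment commutator Jacobian. *)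

From HB Require Import structures.
From mathcomp Require Import all_boot all_order all_algebra.
From mathcomp Require Import all_classical all_reals all_analysis.
Set Implicit Arguments. Unset Strict Implicit. Unset Printing Implicit Defensive.
Import Order.TTheory GRing.Theory Num.Theory.
Local Open Scope ring_scope.

Definition mexpect {dT} {T : measurableType dT} {R : realType}
  (P : probability T R) {m n : nat} (X : T -> 'M[R]_(m, n)) : 'M[R]_(m, n) :=
  \matrix_(i, j) fine ('E_P[fun t => X t i j])%E.

Definition mintegrable {dT} {T : measurableType dT} {R : realType}
  (P : probability T R) {m n : nat} (X : T -> 'M[R]_(m, n)) : Prop :=
  forall i j, P.-integrable setT (fun t => (X t i j)%:E).

Definition Bmat {R : realType} {d dpi : nat} (alpha : R)
  (phi Delta : 'cV[R]_d) : 'M[R]_(d + dpi) :=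
  block_mx (1%:M + alpha *: (phi *m Delta^T)) 0 0 1%:M.

Definition A0mat {R : realType} {d dpi : nat} (beta beta' : R)
  (Hw : 'M[R]_(dpi, d)) (Hpsi : 'M[R]_dpi) : 'M[R]_(d + dpi) :=
  block_mx ((1 - beta') *: 1%:M) 0 (beta *: Hw) (1%:M + beta *: Hpsi).

Definition Sigmabar {dT} {T : measurableType dT} {R : realType}
  (P : probability T R) {d dpi : nat} (alpha beta beta' : R)
  (phi Delta : T -> 'cV[R]_d) (Hw : 'M[R]_(dpi, d)) (Hpsi : 'M[R]_dpi)
  : 'M[R]_(d + dpi) :=
  mexpect P (fun e => A0mat beta beta' Hw Hpsi *m Bmat alpha (phi e) (Delta e)
                      - Bmat alpha (phi e) (Delta e) *m A0mat beta beta' Hw Hpsi).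

From HB Require Import structures.
From mathcomp Require Import all_boot all_order all_algebra.
From mathcomp Require Import all_classical all_reals all_analysis.
Import Order.TTheory GRing.Theory Num.Theory.
Local Open Scope ring_scope.

(* Both B_e and A_0 are block lower triangular and B_e acts as the identity on
   the policy block, so the commutator A_0 B_e - B_e A_0 has a vanishing right
   block column for every transition e; taking expectations entrywise keeps
   that block column zero, whence the policy subspace lies in the kernel.
   Neither integrability nor the value -M of E[phi_e Delta_e^T] is needed. *)

Lemma mul_mx_col0 (R : pzRingType) (m n1 n2 p : nat)
    (S : 'M[R]_(m, n1 + n2)) (x : 'M[R]_(n2, p)) :
  S *m col_mx 0 x = rsubmx S *m x.
Proof. by rewrite -{1}(hsubmxK S) mul_row_col mulmx0 add0r. Qed.

Lemma rsubmx_commutator_block_lower (R : pzRingType) (n1 n2 : nat)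
    (A1 B1 : 'M[R]_n1) (A3 B3 : 'M[R]_(n2, n1)) (A4 : 'M[R]_n2) :
  let A := block_mx A1 0 A3 A4 in
  let B := block_mx B1 0 B3 1%:M in
  rsubmx (A *m B - B *m A) = 0.
Proof.
rewrite /= !mulmx_block !mulmx0 !mul0mx !mulmx1 !mul1mx !addr0 !add0r.
by rewrite !block_mxEh opp_row_mx add_row_mx row_mxKr subrr.
Qed.

Section MatrixExpectation.
Variables (dT : measure_display) (T : measurableType dT) (R : realType).
Variable P : probability T R.

Lemma rsubmx_mexpect (m n1 n2 : nat) (X : T -> 'M[R]_(m, n1 + n2)) :
  rsubmx (mexpect P X) = mexpect P (fun t => rsubmx (X t)).
Proof.
apply/matrixP => i j; rewrite !mxE.
by under [in RHS]eq_fun do rewrite mxE.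
Qed.

Lemma mexpect0 (m n : nat) : mexpect P (fun _ => 0 : 'M[R]_(m, n)) = 0.
Proof. by apply/matrixP => i j; rewrite !mxE (expectation_cst P 0). Qed.

End MatrixExpectation.

Theorem theorem4p24 (R : realType) (dT : measure_display) (T : measurableType dT)
  (P : probability T R) (d dpi : nat) (hd : (1 <= d)%N) (hdpi : (1 <= dpi)%N)
  (alpha beta beta' : R) (phi Delta : T -> 'cV[R]_d) (M : 'M[R]_d)
  (Hw : 'M[R]_(dpi, d)) (Hpsi : 'M[R]_dpi)
  (hint : mintegrable P (fun e => phi e *m (Delta e)^T))
  (hM : mexpect P (fun e => phi e *m (Delta e)^T) = - M) :
  forall x : 'cV[R]_dpi,
    Sigmabar P alpha beta beta' phi Delta Hw Hpsi *m col_mx (0 : 'cV[R]_d) x = 0.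
Proof.
move=> x; rewrite mul_mx_col0 /Sigmabar rsubmx_mexpect.
under eq_fun do rewrite rsubmx_commutator_block_lower.
by rewrite mexpect0 mul0mx.
Qed.
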